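(* Let $n\ge 3$ and $m\ge 5$ be integers, let $\delta\in\{0,\dots,n-1\}$ with $\gcd(1+\delta,n)=1$, and let $G=\langle x\rangle$ be cyclic of order $n$. Let $\Delta$ be the graph with vertex set $G\times\{0,\dots,m-1\}$ (write $g_i=(g,i)$, $G_i=G\times\{i\}$) whose edges are exactly the following: there are no edges inside $G_0$ or inside $G_3$; $G_1$ and $G_2$ each induce complete graphs; for $i\in\{4,\dots,m-1\}$ the edges inside $G_i$ are $\{g_i,(xg)_i\}$, $g\in G$; $g_0\sim g'_2$ iff $g\ne g'$; $g_2\sim g'_3$ iff $g=g'$; $g_3\sim g'_{m-1}$ iff $g\ne g'$; $g_1\sim g'_4$ iff $g\ne g'$; for $\ell\in\{4,\dots,m-2\}$, $g_\ell\sim g'_{\ell+1}$ iff $g\ne g'$; $g_0\sim g'_3$ for all $g,g'$; $g_0\sim g'_1$ iff $g'g^{-1}=x$; $g_1\sim g'_2$ iff $g'g^{-1}=x^\delta$. Identifying each $g\in G$ with the permutation $y_i\mapsto(yg)_i$ of the vertex set, $\mathrm{Aut}(\Delta)=G$. Consequently, every cyclic group of order at least $3$ admits an $m$-GRR for every $m\ge 5$.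
   Context: An $m$-GRR for a group $G$ is a finite regular simple graph having a semiregular group of automorphisms isomorphic to $G$ with exactly $m$ vertex-orbits and whose full automorphism group is isomorphic to $G$. *)

From HB Require Import structures.
From mathcomp Require Import all_boot all_order all_algebra all_fingroup.
Set Implicit Arguments. Unset Strict Implicit. Unset Printing Implicit Defensive.
Import GRing.Theory.

(* Cyclic group G = <x> of order n is modelled by the additive group 'Z_n with
   generator x = 1; multiplicative g'g^{-1} = x^k becomes h - g = k%:R,
   and the product x g becomes 1 + g. *)

(* The "basic" (directed) edge list of the graph Delta; the actual adjacency
   is its symmetric closure. Vertices: 'Z_n * 'I_m, (g, i) = g_i. *)
Definition Delta_basic (n m delta : nat) (u v : 'Z_n * 'I_m) : bool :=
  let: (g, i) := u in let: (h, j) := v in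
  let i := nat_of_ord i in let j := nat_of_ord j in
  [|| (i == 1) && (j == 1) && (g != h),
      (i == 2) && (j == 2) && (g != h),
      (4 <= i)%N && (i == j) && (h == 1 + g)%R,
      (i == 0) && (j == 2) && (g != h),
      (i == 2) && (j == 3) && (g == h),
      (i == 3) && (j == m.-1) && (g != h),
      (i == 1) && (j == 4) && (g != h),
      [&& (4 <= i)%N, (i <= m - 2)%N, j == i.+1 & g != h],
      (i == 0) && (j == 3),
      (i == 0) && (j == 1) && (h - g == 1)%R |
      (i == 1) && (j == 2) && (h - g == delta%:R)%R ].

Definition Delta (n m delta : nat) : rel ('Z_n * 'I_m) :=
  fun u v => @Delta_basic n m delta u v || @Delta_basic n m delta v u.
Arguments Delta {n} m delta u v.

Definition Ztrans (n m : nat) (g : 'Z_n) (u : 'Z_n * 'I_m) : 'Z_n * 'I_m :=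
  ((u.1 + g)%R, u.2).

Definition is_aut (V : finType) (e : rel V) (p : {perm V}) : bool :=
  [forall u, forall v, e (p u) (p v) == e u v].

Definition Aut_graph (V : finType) (e : rel V) : {set {perm V}} :=
  [set p | is_aut e p].

Definition mGRR (m : nat) (gT : finGroupType) (G : {group gT}) : Prop :=
  exists (V : finType) (e : rel V),
    [/\ symmetric e, irreflexive e,
        (exists k, forall v : V, #|[set w | e v w]| = k) &
        exists2 A : {group {perm V}}, A \subset Aut_graph e &
          [/\ A \isog G,
              (forall a, a \in A -> forall v, a v = v -> a = 1%g),
              #|[set orbit 'P A v | v : V]| = m &
              Aut_graph e \isog G]].

(* An automorphism of Delta must preserve every layer G_i, because the layers
   can be told apart by the triangle structure: G_0 and G_3 are exactly the
   ends of the edges lying in no triangle, G_2 consists of the other vertices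
   forming a triangle with two such ends, G_0 of the ends having two distinct
   neighbours in G_2, and G_1 of the remaining vertices adjacent to G_0; the
   layers G_4, ..., G_(m-1) then follow one by one along the path
   G_1 - G_4 - ... - G_(m-1).  On each layer the automorphism acts by some
   bijection s_i of G.  The matchings and co-matchings between layers force
   all s_i to be equal, and the edges g_0 ~ (xg)_1 ~ (x^(1+delta) g)_2 together
   with the co-matching G_0 - G_2 make s_0 commute with multiplication by
   x^(1+delta), a generator of G; so s_0, hence the automorphism, is a
   translation.  The translations act semiregularly with the m layers as
   orbits on a 2n-regular graph, which gives the m-GRR. *)

From mathcomp Require Import all_boot all_order all_algebra all_fingroup all_solvable.
From mathcomp Require Import ring zify.
Import GRing.Theory.
Set Implicit Arguments. Unset Strict Implicit.

Section GraphAutomorphisms.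
Variables (V : finType) (e : rel V).

Lemma is_autP (p : {perm V}) :
  reflect (forall u v, e (p u) (p v) = e u v) (is_aut e p).
Proof.
apply: (iffP forallP) => [H u v | H u]; first exact/eqP/(forallP (H u)).
by apply/forallP => v; rewrite H.
Qed.

Lemma aut_edgeE (p : {perm V}) : is_aut e p -> forall u v, e (p u) (p v) = e u v.
Proof. by move/is_autP. Qed.

Lemma is_aut_inv (p : {perm V}) : is_aut e p -> is_aut e p^-1.
Proof. by move/aut_edgeE=> H; apply/is_autP => u v; rewrite -H !permKV. Qed.

Definition aut_invariant (P : V -> Prop) :=
  forall p v, is_aut e p -> P v -> P (p v).

Lemma aut_invariantE (P : V -> Prop) (p : {perm V}) (v : V) :
  aut_invariant P -> is_aut e p -> P (p v) <-> P v.
Proof.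
move=> HP Hp; split; last exact: HP.
by move/(HP _ _ (is_aut_inv Hp)); rewrite permK.
Qed.

Definition tri_free_end (v : V) :=
  exists2 w, e v w & forall z, ~~ (e v z && e w z).

Definition tri_free_apex (v : V) :=
  ~ tri_free_end v /\
  exists w1 w2, [/\ tri_free_end w1, tri_free_end w2, e v w1, e v w2 & e w1 w2].

Definition tri_free_fork (v : V) :=
  tri_free_end v /\
  exists w1 w2, [/\ w1 != w2, tri_free_apex w1, tri_free_apex w2, e v w1 & e v w2].

Definition fork_neighbour (v : V) :=
  [/\ ~ tri_free_end v, ~ tri_free_apex v & exists2 w, tri_free_fork w & e v w].

Lemma aut_invariant_tri_free_end : aut_invariant tri_free_end.
Proof.
move=> p v /aut_edgeE H [w Hvw Hz]; exists (p w); first by rewrite H.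
by move=> z; rewrite -(permKV p z) !H.
Qed.

Lemma aut_invariant_tri_free_apex : aut_invariant tri_free_apex.
Proof.
move=> p v Hp [nEv [w1 [w2 [E1 E2 e1 e2 e12]]]]; split.
  by rewrite (aut_invariantE _ aut_invariant_tri_free_end Hp).
exists (p w1), (p w2); rewrite !(aut_edgeE Hp).
by split=> //; apply: aut_invariant_tri_free_end.
Qed.

Lemma aut_invariant_tri_free_fork : aut_invariant tri_free_fork.
Proof.
move=> p v Hp [Ev [w1 [w2 [w12 A1 A2 e1 e2]]]].
split; first exact: aut_invariant_tri_free_end.
exists (p w1), (p w2); rewrite !(aut_edgeE Hp) (inj_eq perm_inj).
by split=> //; apply: aut_invariant_tri_free_apex.
Qed.

Lemma aut_invariant_fork_neighbour : aut_invariant fork_neighbour.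
Proof.
move=> p v Hp [nEv nAv [w Fw evw]]; split.
- by rewrite (aut_invariantE _ aut_invariant_tri_free_end Hp).
- by rewrite (aut_invariantE _ aut_invariant_tri_free_apex Hp).
- by exists (p w); [apply: aut_invariant_tri_free_fork | rewrite (aut_edgeE Hp)].
Qed.

End GraphAutomorphisms.

Arguments aut_invariant_tri_free_end {V e}.
Arguments aut_invariant_tri_free_apex {V e}.
Arguments aut_invariant_tri_free_fork {V e}.
Arguments aut_invariant_fork_neighbour {V e}.

Lemma card_set_pair (A B : finType) (P : pred (A * B)) :
  #|[set w | P w]| = \sum_(b : B) #|[set a | P (a, b)]|.
Proof.
rewrite -sum1dep_card (eq_bigl (fun w => xpredT w.1 && P (w.1, w.2))); last by case.
rewrite -(pair_big_dep xpredT (fun a b => P (a, b)) (fun _ _ => 1%N)).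
rewrite (exchange_big_dep xpredT) //=.
by apply: eq_bigr => b _; rewrite -sum1dep_card.
Qed.

Lemma sum_support (T : finType) (F : T -> nat) (s : seq T) :
  uniq s -> (forall x, x \notin s -> F x = 0%N) -> \sum_x F x = \sum_(x <- s) F x.
Proof. by move=> Us F0; rewrite [RHS]big_uniq // [RHS]big_rmcond. Qed.

Local Open Scope ring_scope.

Lemma Zp_unit_shift_translation (p : nat) (u : 'Z_p) (f : 'Z_p -> 'Z_p) :
  u \is a GRing.unit -> (forall g, f (u + g) = u + f g) ->
  forall g, f g = g + f 0.
Proof.
move=> Uu Hf g; rewrite -[g](divrK Uu) -[g / u]natr_Zp.
elim: (nat_of_ord _) => [|k IHk]; first by rewrite !mul0r add0r.
have -> : k.+1%:R * u = u + k%:R * u by rewrite -natr1 mulrDl mul1r addrC.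
by rewrite Hf IHk addrA.
Qed.

Ltac natsimp := repeat match goal with
  | |- context [(?x == ?y :> nat)] =>
      (have -> : (x == y :> nat) = false by lia) || (have -> : (x == y :> nat) = true by lia)
  | |- context [(?x <= ?y)%N] =>
      (have -> : (x <= y)%N = false by lia) || (have -> : (x <= y)%N = true by lia)
  end.
Ltac bsimp := rewrite ?andbF ?andFb ?orbF ?orFb ?andbT ?andTb ?orbT ?orTb.

Section Delta.
Variables (n' m' d : nat).
Local Notation n := n'.+3.
Local Notation m := m'.+1.+4.
Local Notation V := ('Z_n * 'I_m)%type.
Local Notation e := (@Delta n m d).
Local Notation D := (d%:R : 'Z_n).
Local Notation lay k := (@Ordinal m k%N erefl).

Definition cycle_adj (g h : 'Z_n) := (h == 1 + g) || (g == 1 + h).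
(* Otherwise [/=] would unfold the additions of 'Z_n into arithmetic modulo n. *)
Arguments cycle_adj : simpl never.

Definition Delta_adj (i j : nat) (g h : 'Z_n) : bool :=
  if i == 0%N then [|| (j == 1%N) && (h == 1 + g), (j == 2%N) && (g != h) | j == 3%N]
  else if i == 1%N then [|| (j == 0%N) && (g == 1 + h), (j == 1%N) && (g != h),
                            (j == 2%N) && (h == D + g) | (j == 4%N) && (g != h)]
  else if i == 2%N then [|| (j == 0%N) && (h != g), (j == 1%N) && (g == D + h),
                            (j == 2%N) && (g != h) | (j == 3%N) && (g == h)]
  else if i == 3%N then [|| j == 0%N, (j == 2%N) && (g == h) | (j == m.-1) && (g != h)]
  else [|| (j == i) && cycle_adj g h,
           (j == i.+1) && (g != h),
           [&& i == j.+1, (4 <= j)%N & g != h],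
           [&& j == 1%N, i == 4%N & g != h] |
           [&& j == 3%N, i == m.-1 & g != h]].

Lemma DeltaE (g h : 'Z_n) (i j : 'I_m) : e (g, i) (h, j) = Delta_adj i j g h.
Proof.
rewrite /Delta_adj /Delta /Delta_basic /=.
case: i j => [i Hi] [j Hj] /=.
case: i Hi => [|[|[|[|i]]]] Hi /=; case: j Hj => [|[|[|[|j]]]] Hj /=;
  natsimp; bsimp; rewrite ?subr_eq ?(eq_sym h g) ?orbb //.
by case: (ltngtP i j) => Hij; natsimp; bsimp.
Qed.

Lemma Delta_sym : symmetric e.
Proof. by move=> u v; rewrite /Delta orbC. Qed.

(* The neighbouring layers of G_i, i >= 4, on the path G_1 - G_4 - ... - G_(m-1) - G_3. *)
Definition layer_up (i : 'I_m) : 'I_m := inord (if (i : nat) == m.-1 then 3%N else i.+1).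
Definition layer_down (i : 'I_m) : 'I_m := inord (if (i : nat) == 4%N then 1%N else i.-1).

Lemma layer_upE (i : 'I_m) : layer_up i = (if (i : nat) == m.-1 then 3%N else i.+1) :> nat.
Proof. by rewrite inordK //; have := ltn_ord i; case: eqP; lia. Qed.

Lemma layer_downE (i : 'I_m) : layer_down i = (if (i : nat) == 4%N then 1%N else i.-1) :> nat.
Proof. by rewrite inordK //; have := ltn_ord i; case: eqP; lia. Qed.

Lemma DeltaE_high (g h : 'Z_n) (i j : 'I_m) : (4 <= i)%N ->
  e (g, i) (h, j) = [|| (j == i) && cycle_adj g h,
                       (j == layer_up i) && (g != h) | (j == layer_down i) && (g != h)].
Proof.
case: i j => [i Hi] [j Hj] /= Hi4; rewrite DeltaE /layer_up /layer_down -!val_eqE.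
rewrite /Delta_adj; case: i Hi Hi4 => [|[|[|[|i]]]] Hi //= _.
case: ifP => /eqP Eu; case: ifP => /eqP Ed; rewrite !inordK; try lia.
all: case: j Hj => [|[|[|[|j]]]] Hj; natsimp; bsimp => //.
all: by rewrite !eqSS [i == _]eq_sym.
Qed.

Lemma one_neq0 : (1 : 'Z_n) != 0.
Proof. exact: oner_neq0. Qed.

Lemma two_neq0 : (1 + 1 : 'Z_n) != 0.
Proof.
apply/eqP => /(congr1 val); change (((2%:R : 'Z_n) : nat) = 0%N -> False).
by rewrite val_Zp_nat // modn_small.
Qed.

Hypothesis coprime_d1n : coprime d.+1 n.

Lemma D1_unit : D + 1 \is a GRing.unit.
Proof. by rewrite natr1 unitZpE // coprime_sym. Qed.

Lemma D1_neq0 : D + 1 != 0.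
Proof. by apply: contraTneq D1_unit => ->; rewrite unitr0. Qed.

Lemma neq_shift (c x y : 'Z_n) : c != 0 -> x = c + y -> x != y.
Proof. by move=> Hc ->; rewrite -subr_eq0 addrK. Qed.

Ltac shift_by c := solve [ apply: (neq_shift c); ring
                         | rewrite eq_sym; apply: (neq_shift c); ring ].

Ltac solve_Zn := solve [ done | by rewrite eq_sym | apply/eqP; ring
  | apply/andP; split; solve_Zn | apply/orP; left; solve_Zn | apply/orP; right; solve_Zn
  | shift_by one_neq0 | shift_by two_neq0 | shift_by D1_neq0 ].

Ltac solve_adj := rewrite ?DeltaE /Delta_adj /cycle_adj /=; natsimp; bsimp; solve_Zn.

Lemma exists_neq2 (g h : 'Z_n) : exists x, (x != g) && (x != h).
Proof.
have : ~~ ([set: 'Z_n] \subset [set g; h]).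
  by apply/negP => /subset_leq_card; rewrite cardsT card_ord cards2; case: (g != h).
by case/subsetPn => x _; rewrite !inE negb_or; exists x.
Qed.

Lemma exists_cycle_adj_neq (g h : 'Z_n) : exists x, cycle_adj g x && (x != h).
Proof.
case: (eqVneq (1 + g) h) => [<-|ne]; last by exists (1 + g); rewrite /cycle_adj eqxx.
by exists (g - 1); rewrite /cycle_adj; solve_Zn.
Qed.

Lemma edge_in_triangle_high (g : 'Z_n) (i : 'I_m) (w : V) :
  (4 <= i)%N -> e (g, i) w -> exists z, e (g, i) z && e w z.
Proof.
case: w => h j Hi; rewrite DeltaE_high // => /or3P [] /andP [/eqP -> Hgh].
- have [x /andP [Hxg Hxh]] := @exists_neq2 g h.
  exists (x, layer_down i).
  by rewrite !DeltaE_high // (eqxx (layer_down i)) ![_ == x]eq_sym Hxg Hxh !orbT.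
- have [x /andP [Hgx Hxh]] := @exists_cycle_adj_neq g h.
  exists (x, i); rewrite [e (h, _) _]Delta_sym !DeltaE_high //.
  by rewrite (eqxx i) (eqxx (layer_up i)) Hgx Hxh orbT.
- have [x /andP [Hgx Hxh]] := @exists_cycle_adj_neq g h.
  exists (x, i); rewrite [e (h, _) _]Delta_sym !DeltaE_high //.
  by rewrite (eqxx i) (eqxx (layer_down i)) Hgx Hxh !orbT.
Qed.

Lemma edge_in_triangle_low (g : 'Z_n) (i : 'I_m) (w : V) :
  (i == 1%N :> nat) || (i == 2%N :> nat) -> e (g, i) w -> exists z, e (g, i) z && e w z.
Proof.
case: i w => [i Hi] [h [j Hj]] /= /orP [] /eqP Ei; subst i; rewrite DeltaE /Delta_adj /=.
- case/or4P => /andP [/eqP Ej Hgh]; subst j.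
  + by move/eqP: Hgh => ->; exists (D + (1 + h), lay 2); solve_adj.
  + by have [x /andP [? ?]] := @exists_neq2 g h; exists (x, lay 4); solve_adj.
  + by move/eqP: Hgh => ->; exists (g - 1, lay 0); solve_adj.
  + by have [x /andP [? ?]] := @exists_neq2 g h; exists (x, lay 1); solve_adj.
- case/or4P => /andP [/eqP Ej Hgh]; subst j.
  + by exists (g, lay 3); solve_adj.
  + by move/eqP: Hgh => ->; exists (h - 1, lay 0); solve_adj.
  + by have [x /andP [? ?]] := @exists_neq2 g h; exists (x, lay 0); solve_adj.
  + by move/eqP: Hgh => <-; exists (1 + g, lay 0); solve_adj.
Qed.

Lemma tri_free_endE (v : V) : tri_free_end e v <-> v.2 = 0%N :> nat \/ v.2 = 3%N :> nat.
Proof.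
case: v => g i /=; split => [[w evw no_tri] | Ei].
- case: (ltnP i 4) => [Hi4 | Hi4]; last first.
    by have [z] := edge_in_triangle_high Hi4 evw; rewrite (negbTE (no_tri z)).
  have : ~~ ((i == 1%N :> nat) || (i == 2%N :> nat)).
    by apply/negP => /edge_in_triangle_low/(_ evw) [z]; rewrite (negbTE (no_tri z)).
  rewrite negb_or => /andP [/eqP ? /eqP ?]; lia.
- case: i Ei => i Hi /= [] Ei; subst i; [exists (g, lay 3) | exists (g, lay 0)].
  all: first [solve_adj | move=> [h [j Hj]]; rewrite !DeltaE /Delta_adj /=].
  all: by case: j Hj => [|[|[|[|j]]]] Hj; natsimp; bsimp => //; case: eqP.
Qed.

Lemma tri_free_apexE (v : V) : tri_free_apex e v <-> v.2 = 2%N :> nat.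
Proof.
case: v => g [i Hi] /=; split => [[nE [[h1 [j1 Hj1]] [[h2 [j2 Hj2]] [E1 E2 e1 e2 e12]]]] | Ei].
- have [Hi0 Hi3] : i <> 0%N /\ i <> 3%N.
    by split=> Ei; apply: nE; apply/tri_free_endE; [left | right].
  case: (eqVneq i 2%N) => [// | /eqP Hi2]; exfalso.
  move/tri_free_endE: E1 => /= E1; move/tri_free_endE: E2 => /= E2.
  move: e1 e2 e12; rewrite !DeltaE /Delta_adj /=.
  by case: E1 => ->; case: E2 => ->; case: (eqVneq i 1%N) => [|/eqP] Hi1;
    natsimp; bsimp.
- subst i; split; first by move/tri_free_endE => /= [].
  exists (1 + g, lay 0), (g, lay 3).
  by split; [apply/tri_free_endE; left | apply/tri_free_endE; right | solve_adj ..].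
Qed.

Lemma tri_free_forkE (v : V) : tri_free_fork e v <-> v.2 = 0%N :> nat.
Proof.
case: v => g [i Hi] /=; split => [[/tri_free_endE /= [// | Ei] Fv] | Ei]; subst i.
- case: Fv => -[h1 [j1 Hj1]] [[h2 [j2 Hj2]] [w12 /tri_free_apexE /= Ej1]].
  move/tri_free_apexE => /= Ej2; subst j1 j2.
  rewrite !DeltaE /Delta_adj /=; bsimp => /eqP E1 /eqP E2; subst h1 h2.
  by move: w12; rewrite (bool_irrelevance Hj1 Hj2) eqxx.
- split; first by apply/tri_free_endE; left.
  exists (1 + g, lay 2), (1 + (1 + g), lay 2).
  split; [| exact/tri_free_apexE | exact/tri_free_apexE | solve_adj | solve_adj].
  by rewrite xpair_eqE negb_and; solve_Zn.
Qed.

Lemma fork_neighbourE (v : V) : fork_neighbour e v <-> v.2 = 1%N :> nat.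
Proof.
case: v => g [i Hi] /=; split => [[nE nA [[h [j Hj]] /tri_free_forkE /= Ej evw]] | Ei]; subst.
- have [Hi0 Hi3] : i <> 0%N /\ i <> 3%N.
    by split=> Ei; apply: nE; apply/tri_free_endE; [left | right].
  have Hi2 : i <> 2%N by move=> Ei; apply: nA; apply/tri_free_apexE.
  case: (eqVneq i 1%N) => [// | /eqP Hi1]; exfalso.
  by move: evw; rewrite DeltaE /Delta_adj /=; natsimp.
- split; [by move/tri_free_endE => /= [] | by move/tri_free_apexE |].
  by exists (g - 1, lay 0); [apply/tri_free_forkE | solve_adj].
Qed.

Lemma aut_layer_low (p : {perm V}) (v : V) : is_aut e p -> (v.2 <= 3)%N -> (p v).2 = v.2.
Proof.
move=> Hp Hv; apply: val_inj.
have layer_of P k : aut_invariant e P -> (forall w : V, P w <-> w.2 = k :> nat) ->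
    forall w : V, w.2 = k :> nat -> (p w).2 = k :> nat.
  by move=> HP PE w /PE Pw; apply/PE/HP.
case: v Hv => g [[|[|[|[|i]]]] Hi] //= _.
- by apply: (layer_of _ _ aut_invariant_tri_free_fork tri_free_forkE).
- by apply: (layer_of _ _ aut_invariant_fork_neighbour fork_neighbourE).
- by apply: (layer_of _ _ aut_invariant_tri_free_apex tri_free_apexE).
apply: (layer_of (fun w => tri_free_end e w /\ ~ tri_free_fork e w)) => //.
- move=> q w Hq [Ew nFw]; split; first exact: aut_invariant_tri_free_end.
  by rewrite (aut_invariantE _ aut_invariant_tri_free_fork Hq).
- by move=> w; rewrite tri_free_endE tri_free_forkE; lia.
Qed.

Lemma aut_layer (p : {perm V}) (v : V) : is_aut e p -> (p v).2 = v.2.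
Proof.
suff IH k : forall p (v : V), is_aut e p -> v.2 = k :> nat -> (p v).2 = v.2.
  by move=> Hp; apply: IH Hp erefl.
elim/ltn_ind: k => k IH {}p [g i] Hp /= Ek; subst k.
case: (leqP i 3) => [Hi3|Hi4]; first exact: (@aut_layer_low p (g, i) Hp Hi3).
have down_lt : (layer_down i < i)%N by rewrite layer_downE; case: eqP; lia.
have layer_ge : (i <= (p (g, i)).2)%N.
  rewrite leqNgt; apply/negP => lt_i.
  have := IH _ lt_i (p^-1)%g (p (g, i)) (is_aut_inv Hp) erefl.
  by rewrite permK /= => Ei; rewrite -Ei ltnn in lt_i.
have : e (p (g, i)) (p (1 + g, layer_down i)).
  rewrite (aut_edgeE Hp) DeltaE_high // (eqxx (layer_down i)); solve_Zn.
rewrite [p (_, layer_down i)]surjective_pairing (IH _ down_lt) //.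
case: (p (g, i)) layer_ge => x l /= layer_ge; rewrite DeltaE_high; last by lia.
move=> /or3P [] /andP [/eqP /(congr1 (@nat_of_ord _)) E _]; apply: ord_inj; move: E.
all: rewrite ?layer_downE ?layer_upE; repeat case: eqP; lia.
Qed.

Ltac solve_layer_adj := move=> ? ?; rewrite DeltaE /Delta_adj /=; natsimp; bsimp;
  rewrite ?addbF ?addbT ?negbK.

Section AutomorphismShift.
Variable p : {perm V}.
Hypothesis p_aut : is_aut e p.
Let s (i : 'I_m) (g : 'Z_n) := (p (g, i)).1.

Lemma aut_vertexE (g : 'Z_n) (i : 'I_m) : p (g, i) = (s i g, i).
Proof. by rewrite [LHS]surjective_pairing (aut_layer _ p_aut). Qed.

Lemma aut_shift_add (i j : 'I_m) (c : 'Z_n) (b : bool) :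
  (forall g h, e (g, i) (h, j) = (h == c + g) (+) b) ->
  forall g, s j (c + g) = c + s i g.
Proof.
move=> E g; have := aut_edgeE p_aut (g, i) (c + g, j).
by rewrite !aut_vertexE !E eqxx => /addIb/eqP.
Qed.

Lemma aut_shift_eq (i j : 'I_m) (b : bool) :
  (forall g h, e (g, i) (h, j) = (g != h) (+) b) -> s j =1 s i.
Proof.
move=> E g; have := @aut_shift_add i j 0 (~~ b) _ g; rewrite !add0r; apply.
by move=> h k; rewrite E add0r addbN -addNb eq_sym.
Qed.

Lemma aut_shift_layer0 (g : 'Z_n) : s (lay 0) g = g + s (lay 0) 0.
Proof.
have s02 : s (lay 2) =1 s (lay 0).
  by apply: (aut_shift_eq (b := false)); solve_layer_adj.
have s01 x : s (lay 1) (1 + x) = 1 + s (lay 0) x.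
  by apply: (aut_shift_add (b := false)); solve_layer_adj.
have s12 x : s (lay 2) (D + x) = D + s (lay 1) x.
  by apply: (aut_shift_add (b := false)); solve_layer_adj.
apply: (Zp_unit_shift_translation D1_unit) => {}g.
by rewrite -s02 -?addrA s12 s01.
Qed.

Lemma aut_shift_layer (i : 'I_m) : s i =1 s (lay 0).
Proof.
have s1 : s (lay 1) =1 s (lay 0).
  move=> g; rewrite aut_shift_layer0 -[g](subrK 1) addrC.
  rewrite (aut_shift_add (i := lay 0) (b := false)); last by solve_layer_adj.
  by rewrite (aut_shift_layer0 (g - 1)) addrA.
have s2 : s (lay 2) =1 s (lay 0) by apply: (aut_shift_eq (b := false)); solve_layer_adj.
have s3 : s (lay 3) =1 s (lay 2) by apply: (aut_shift_eq (b := true)); solve_layer_adj.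
have s_ge4 k (Hk : (k.+4 < m)%N) : s (Ordinal Hk) =1 s (lay 0).
  elim: k Hk => [|k IHk] Hk g.
    by rewrite -s1; apply: (aut_shift_eq (b := false)); solve_layer_adj.
  by rewrite -(IHk (ltnW Hk)); apply: (aut_shift_eq (b := false)); solve_layer_adj.
case: i => -[|[|[|[|k]]]] Hk g; last exact: s_ge4.
- by rewrite (_ : Ordinal Hk = lay 0) //; apply: val_inj.
- by rewrite (_ : Ordinal Hk = lay 1) ?s1 //; apply: val_inj.
- by rewrite (_ : Ordinal Hk = lay 2) ?s2 //; apply: val_inj.
- by rewrite (_ : Ordinal Hk = lay 3) ?s3 ?s2 //; apply: val_inj.
Qed.

Lemma aut_translation (u : V) : p u = Ztrans (s (lay 0) 0) u.
Proof. by case: u => g i; rewrite aut_vertexE aut_shift_layer aut_shift_layer0. Qed.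
End AutomorphismShift.

Lemma Delta_adj_translate (i j : nat) (g h c : 'Z_n) :
  Delta_adj i j (g + c) (h + c) = Delta_adj i j g h.
Proof. by rewrite /Delta_adj /cycle_adj !addrA !(inj_eq (addIr c)). Qed.

Lemma Delta_Ztrans (c : 'Z_n) (u v : V) : e (Ztrans c u) (Ztrans c v) = e u v.
Proof. by case: u v => g i [h j]; rewrite !DeltaE Delta_adj_translate. Qed.

Lemma Delta_autP (p : {perm V}) : is_aut e p <-> exists c, forall u, p u = Ztrans c u.
Proof.
split=> [Hp | [c Hc]]; first by eexists; apply: aut_translation Hp.
by apply/is_autP => u v; rewrite !Hc Delta_Ztrans.
Qed.

Lemma ZtransK (c : 'Z_n) : cancel (@Ztrans n m c) (Ztrans (- c)).
Proof. by case=> g i; rewrite /Ztrans addrK. Qed.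

Definition Ztrans_perm (c : 'Z_n) : {perm V} := perm (can_inj (ZtransK c)).

Lemma Ztrans_morphM :
  {in [set: 'Z_n] &, {morph Ztrans_perm : a b / (a * b)%g >-> (a * b)%g}}.
Proof.
by move=> a b _ _; apply/permP => -[g i]; rewrite permM !permE /Ztrans /= addrA.
Qed.

Canonical Ztrans_morphism := Morphism Ztrans_morphM.

Local Notation translations := (Ztrans_morphism @* [set: 'Z_n])%g.

Lemma injm_Ztrans : ('injm Ztrans_morphism)%g.
Proof.
apply/injmP => a b _ _ /(congr1 (fun q : {perm V} => q (0, lay 0))).
by rewrite /= !permE /Ztrans /= !add0r => -[].
Qed.

Lemma Aut_Delta : Aut_graph e = translations.
Proof.
apply/setP => q; rewrite inE; apply/idP/morphimP => [/Delta_autP [c Hc] | [c _ _ ->]].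
  by exists c; rewrite ?inE //; apply/permP => u; rewrite Hc /= permE.
by apply/Delta_autP; exists c => u; rewrite /= permE.
Qed.

Lemma orbit_Ztrans (v : V) :
  orbit 'P translations v = [set w | w.2 == v.2].
Proof.
apply/setP => w; rewrite inE; apply/orbitP/eqP => [[_ /morphimP [c _ _ ->] <-] | Ew].
  by rewrite /= apermE permE.
exists (Ztrans_perm (w.1 - v.1)); first by rewrite mem_morphim ?inE.
by rewrite /= apermE permE /Ztrans addrC subrK -Ew -surjective_pairing.
Qed.

Lemma Delta_irreflexive : irreflexive e.
Proof.
case=> g i; rewrite DeltaE /Delta_adj /cycle_adj.
have g1g : (g == 1 + g) = false by apply/negbTE; solve_Zn.
by case: i => -[|[|[|[|i]]]] Hi; natsimp; bsimp; rewrite ?eqxx ?g1g.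
Qed.

Lemma card_Zn : #|'Z_n| = n.
Proof. by rewrite card_ord. Qed.

Lemma eq_shift (x c h : 'Z_n) : (x == c + h) = (h == x - c).
Proof. by apply/eqP/eqP => [->|->]; ring. Qed.

Ltac layer_setE := apply/setP => ?; rewrite !inE DeltaE /Delta_adj /=; natsimp; bsimp;
  first [ done | by rewrite eq_sym | by rewrite eq_shift | by rewrite eq_sym eq_shift ].

Ltac layer_set0 := move=> [l Hl]; rewrite !inE -!val_eqE /= => Hl'; apply/eqP;
  rewrite cards_eq0; apply/eqP/setP => h; rewrite !inE DeltaE /Delta_adj /=; natsimp; bsimp.

Lemma Delta_degree_low (g : 'Z_n) (i : 'I_m) :
  (i <= 3)%N -> #|[set w | e (g, i) w]| = (n + n)%N.
Proof.
rewrite card_set_pair; case: i => -[|[|[|[|i]]]] Hi // _.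
- rewrite (sum_support (s := [:: lay 1; lay 2; lay 3])) //; last by layer_set0.
  rewrite !big_cons big_nil.
  have -> : [set h | e (g, Ordinal Hi) (h, lay 1)] = [set 1 + g] by layer_setE.
  have -> : [set h | e (g, Ordinal Hi) (h, lay 2)] = [set~ g] by layer_setE.
  have -> : [set h | e (g, Ordinal Hi) (h, lay 3)] = [set: 'Z_n] by layer_setE.
  by rewrite cards1 cardsC1 cardsT card_Zn; lia.
- rewrite (sum_support (s := [:: lay 0; lay 1; lay 2; lay 4])) //; last by layer_set0.
  rewrite !big_cons big_nil.
  have -> : [set h | e (g, Ordinal Hi) (h, lay 0)] = [set g - 1] by layer_setE.
  have -> : [set h | e (g, Ordinal Hi) (h, lay 1)] = [set~ g] by layer_setE.
  have -> : [set h | e (g, Ordinal Hi) (h, lay 2)] = [set D + g] by layer_setE.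
  have -> : [set h | e (g, Ordinal Hi) (h, lay 4)] = [set~ g] by layer_setE.
  by rewrite !cards1 !cardsC1 card_Zn; lia.
- rewrite (sum_support (s := [:: lay 0; lay 1; lay 2; lay 3])) //; last by layer_set0.
  rewrite !big_cons big_nil.
  have -> : [set h | e (g, Ordinal Hi) (h, lay 0)] = [set~ g] by layer_setE.
  have -> : [set h | e (g, Ordinal Hi) (h, lay 1)] = [set g - D] by layer_setE.
  have -> : [set h | e (g, Ordinal Hi) (h, lay 2)] = [set~ g] by layer_setE.
  have -> : [set h | e (g, Ordinal Hi) (h, lay 3)] = [set g] by layer_setE.
  by rewrite !cards1 !cardsC1 card_Zn; lia.
- rewrite (sum_support (s := [:: lay 0; lay 2; ord_max])) //; last by layer_set0.
  rewrite !big_cons big_nil.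
  have -> : [set h | e (g, Ordinal Hi) (h, lay 0)] = [set: 'Z_n] by layer_setE.
  have -> : [set h | e (g, Ordinal Hi) (h, lay 2)] = [set g] by layer_setE.
  have -> : [set h | e (g, Ordinal Hi) (h, ord_max)] = [set~ g] by layer_setE.
  by rewrite cards1 cardsC1 cardsT card_Zn; lia.
Qed.

Lemma Delta_degree_high (g : 'Z_n) (i : 'I_m) :
  (4 <= i)%N -> #|[set w | e (g, i) w]| = (n + n)%N.
Proof.
move=> Hi.
have [ui di ud] : [/\ (i == layer_up i) = false, (i == layer_down i) = false
                    & (layer_up i == layer_down i) = false].
  by rewrite -!val_eqE /= layer_upE layer_downE; split; repeat case: eqP; lia.
rewrite card_set_pair (sum_support (s := [:: i; layer_up i; layer_down i])); first last.
- move=> l; rewrite !inE !negb_or => /and3P [/negbTE li /negbTE lu /negbTE ld].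
  by apply/eqP; rewrite cards_eq0; apply/eqP/setP => h; rewrite !inE DeltaE_high // li lu ld.
- by rewrite /= !inE !negb_or ui di ud.
rewrite !big_cons big_nil.
have -> : [set h | e (g, i) (h, i)] = [set 1 + g; g - 1].
  by apply/setP => h; rewrite !inE DeltaE_high // eqxx ui di orbF /cycle_adj (eq_shift g).
have -> : [set h | e (g, i) (h, layer_up i)] = [set~ g].
  apply/setP => h; rewrite !inE DeltaE_high // eqxx.
  by rewrite [layer_up i == i]eq_sym ui ud [h == g]eq_sym orbF.
have -> : [set h | e (g, i) (h, layer_down i)] = [set~ g].
  apply/setP => h; rewrite !inE DeltaE_high // eqxx.
  by rewrite [layer_down i == i]eq_sym di [layer_down i == _]eq_sym ud [h == g]eq_sym.
have g_neq : (1 + g == g - 1) = false by apply/negbTE; solve_Zn.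
by rewrite cards2 g_neq !cardsC1 card_Zn; lia.
Qed.

Lemma Delta_regular (v : V) : #|[set w | e v w]| = (n + n)%N.
Proof.
by case: v => g i; case: (leqP i 3) => Hi; [exact: Delta_degree_low | exact: Delta_degree_high].
Qed.

Lemma translations_semiregular (a : {perm V}) :
  a \in translations -> forall v, a v = v -> a = 1%g.
Proof.
move=> /morphimP [c _ _ ->] v /=; rewrite permE => Ev.
have c0 : c = 0 by apply: (addrI v.1); rewrite addr0; exact: (congr1 fst Ev).
by apply/permP => u; rewrite permE perm1 c0 /Ztrans addr0 -surjective_pairing.
Qed.

Lemma card_orbits_translations : #|[set orbit 'P translations v | v : V]| = m.
Proof.
have -> : [set orbit 'P translations v | v : V] = [set [set w : V | w.2 == l] | l : 'I_m].
  apply/setP => X; apply/imsetP/imsetP => [[v _ ->] | [l _ ->]].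
    by exists v.2; rewrite ?orbit_Ztrans.
  by exists (0, l); rewrite ?orbit_Ztrans.
rewrite card_imset ?card_ord // => l1 l2 E.
have : ((0 : 'Z_n), l1) \in [set w : V | w.2 == l1] by rewrite inE.
by rewrite E inE => /eqP.
Qed.

Lemma Delta_mGRR (gT : finGroupType) (G : {group gT}) : cyclic G -> #|G| = n -> mGRR m G.
Proof.
move=> cycG oG; exists V, e; split.
- exact: Delta_sym.
- exact: Delta_irreflexive.
- by exists (n + n)%N; exact: Delta_regular.
have transG : translations \isog G.
  apply: isog_trans (isog_symr (sub_isog (subxx _) injm_Ztrans)) _.
  have cycZn : cyclic [set: 'Z_n] by rewrite Zp_cycle cycle_cyclic.
  by rewrite (isog_cyclic_card _ cycZn) cycG cardsT card_ord oG /Zp_trunc; lia.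
exists [group of translations]; first by rewrite Aut_Delta.
split=> //; [exact: translations_semiregular | exact: card_orbits_translations |].
by rewrite Aut_Delta.
Qed.
End Delta.

Local Close Scope ring_scope.

Theorem lemma4p7 :
  (forall (n m delta : nat), 3 <= n -> 5 <= m -> delta < n -> coprime delta.+1 n ->
     forall p : {perm 'Z_n * 'I_m},
       is_aut (Delta m delta) p <->
       exists g : 'Z_n, forall u, p u = Ztrans g u)
  /\
  (forall (gT : finGroupType) (G : {group gT}), cyclic G -> 3 <= #|G| ->
     forall m, 5 <= m -> mGRR m G).
Proof.
split=> [n m d n_ge3 m_ge5 _ cop p | gT G cycG G_ge3 m m_ge5].
  have [n' En] : exists n', n = n'.+3 by exists (n - 3); lia.
  have [m' Em] : exists m', m = m'.+1.+4 by exists (m - 5); lia.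
  by subst n m; apply: Delta_autP.
have [n' En] : exists n', #|G| = n'.+3 by exists (#|G| - 3); lia.
have [m' Em] : exists m', m = m'.+1.+4 by exists (m - 5); lia.
by subst m; exact (Delta_mGRR m' (coprime1n _) cycG En).
Qed.
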